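(* Let $H\in\mathbb{R}^{n\times d}$ have rank $h$, $\Sigma\in\mathbb{R}^{n\times n}$ symmetric positive definite, $\Gamma_0$ the empirical covariance of an initial ensemble, $G_0=\Gamma_0$ and $G_{i+1}=(I+G_iH^\top\Sigma^{-1}H)^{-1}G_i$. Fix $i\ge0$, and let $\tilde w_1,\dots,\tilde w_n$, $r$, $\tilde\delta_{\ell,i}$ be as in the context. For $\ell=1,\dots,r$ let $\tilde u_\ell=\frac1{\tilde\delta_{\ell,i}}G_iH^\top\tilde w_\ell$, and for $\ell=r+1,\dots,h$ let $\tilde u_\ell=H^+\Sigma\tilde w_\ell$. Then for all $\ell\le h$, $G_iH^\top\Sigma^{-1}H\tilde u_\ell=\tilde\delta_{\ell,i}\tilde u_\ell$, and conversely $\tilde w_\ell=\Sigma^{-1}H\tilde u_\ell$.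
   Context: $H^+=(H^\top\Sigma^{-1}H)^\dagger H^\top\Sigma^{-1}$, $\dagger$ the Moore–Penrose pseudoinverse. $\Gamma_0=\frac1{J-1}\sum_j(v_0^{(j)}-\bar v_0)(v_0^{(j)}-\bar v_0)^\top$. Let $C_i=HG_iH^\top$, $r$ the number of positive eigenvalues of the pencil $(C_i,\Sigma)$, and $\tilde w_1,\dots,\tilde w_n$ a $\Sigma$-orthogonal basis of $\mathbb{R}^n$ of generalized eigenvectors, $C_i\tilde w_\ell=\tilde\delta_{\ell,i}\Sigma\tilde w_\ell$, with $\tilde w_1,\dots,\tilde w_r\in\mathsf{Ran}(\Sigma^{-1}H)$ having positive eigenvalues, $\tilde w_{r+1},\dots,\tilde w_h\in\mathsf{Ran}(\Sigma^{-1}H)$ eigenvalue zero, $\tilde w_{h+1},\dots,\tilde w_n\in\mathsf{Ker}(H^\top)$. *)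

From HB Require Import structures.
From mathcomp Require Import all_boot all_order all_algebra.
Set Implicit Arguments. Unset Strict Implicit. Unset Printing Implicit Defensive.
Import Order.TTheory GRing.Theory Num.Theory.
Local Open Scope ring_scope.

Definition spd (R : realFieldType) (n : nat) (S : 'M[R]_n) : Prop :=
  S^T = S /\ forall x : 'cV[R]_n, x != 0 -> 0 < (x^T *m S *m x) 0 0.

Definition is_mp_pinv (R : realFieldType) (m k : nat)
  (A : 'M[R]_(m, k)) (X : 'M[R]_(k, m)) : Prop :=
  [/\ A *m X *m A = A, X *m A *m X = X,
      (A *m X)^T = A *m X & (X *m A)^T = X *m A].

Definition emp_mean (R : realFieldType) (d J : nat) (v : 'I_J -> 'cV[R]_d)
  : 'cV[R]_d := J%:R^-1 *: \sum_(j < J) v j.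

Definition emp_cov (R : realFieldType) (d J : nat) (v : 'I_J -> 'cV[R]_d)
  : 'M[R]_d :=
  (J%:R - 1)^-1 *: \sum_(j < J) ((v j - emp_mean v) *m (v j - emp_mean v)^T).

Fixpoint Gseq (R : realFieldType) (n d : nat) (H : 'M[R]_(n, d)) (S : 'M[R]_n)
  (G0 : 'M[R]_d) (i : nat) : 'M[R]_d :=
  match i with
  | 0 => G0
  | i'.+1 => let Gi := Gseq H S G0 i' in
             invmx (1%:M + Gi *m H^T *m invmx S *m H) *m Gi
  end.

From HB Require Import structures.
From mathcomp Require Import all_boot all_order all_algebra.
From mathcomp Require Import ring lra.
Set Implicit Arguments. Unset Strict Implicit.
Unset Printing Implicit Defensive.
Import Order.TTheory GRing.Theory Num.Theory.
Local Open Scope ring_scope.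

(* Every G_i is symmetric positive semidefinite, since this is preserved by
   G |-> (I + G A)^{-1} G for A = H^T S^{-1} H psd.  For a positive
   eigenvalue, H u = S w by the pencil equation, so S^{-1} H u = w and
   G_i H^T S^{-1} H u = G_i H^T w = delta u.  For eigenvalue zero,
   w = S^{-1} H x and the Penrose equation A A^+ A = A together with the
   definiteness of S^{-1} give H u = H x, whence S^{-1} H u = w; moreover
   (H^T w)^T G_i (H^T w) = w^T C_i w = 0, so G_i H^T w = 0 by
   semidefiniteness. *)

Section SemidefiniteMatrices.
Variable R : realFieldType.

Definition psdmx (d : nat) (G : 'M[R]_d) : Prop :=
  G^T = G /\ forall x : 'cV[R]_d, 0 <= (x^T *m G *m x) 0 0.

Lemma inj_unitmx (n : nat) (M : 'M[R]_n) :
  (forall x : 'cV[R]_n, M *m x = 0 -> x = 0) -> M \in unitmx.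
Proof.
move=> Minj; rewrite -unitmx_tr -row_free_unit; apply: inj_row_free => v vM0.
apply: trmx_inj; rewrite trmx0; apply: Minj.
by have := congr1 trmx vM0; rewrite trmx_mul trmxK trmx0.
Qed.

Lemma trmx_mul_self_ge0 (d : nat) (v : 'cV[R]_d) : 0 <= (v^T *m v) 0 0.
Proof. by rewrite mxE; apply: sumr_ge0 => j _; rewrite mxE -expr2 sqr_ge0. Qed.

Lemma trmx_mul_self_eq0 (d : nat) (v : 'cV[R]_d) : (v^T *m v) 0 0 = 0 -> v = 0.
Proof.
rewrite mxE => /eqP; rewrite psumr_eq0 => [/allP v0|j _]; last first.
  by rewrite mxE -expr2 sqr_ge0.
apply/matrixP => i j; rewrite (ord1 j) [RHS]mxE.
by have := v0 i (mem_index_enum i); rewrite mxE -expr2 sqrf_eq0 => /eqP.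
Qed.

(* Along the line z - e G z the form equals -2 e |G z|^2 + e^2 c, with
   c = (G z)^T G (G z); this is negative for small e > 0 unless G z = 0. *)
Lemma psdmx_form_eq0 (d : nat) (G : 'M[R]_d) (z : 'cV[R]_d) :
  psdmx G -> (z^T *m G *m z) 0 0 = 0 -> G *m z = 0.
Proof.
move=> [sG pG] qz; set y := G *m z.
set s := (y^T *m y) 0 0; set c := (y^T *m G *m y) 0 0.
have form_line e :
    ((z - e *: y)^T *m G *m (z - e *: y)) 0 0 = - 2 * e * s + e ^+ 2 * c.
  have zGy : z^T *m G *m y = y^T *m y by rewrite /y trmx_mul sG mulmxA.
  have yGz : y^T *m G *m z = y^T *m y by rewrite /y -mulmxA.
  rewrite [(_ - _)^T]linearB /= [(_ *: _)^T]linearZ /= !mulmxBl !mulmxBr.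
  rewrite -!scalemxAl -!scalemxAr zGy yGz.
  by rewrite /s /c !mxE; rewrite !mxE in qz; rewrite qz; ring.
have c_ge0 : 0 <= c by exact: pG.
have s_ge0 : 0 <= s by exact: trmx_mul_self_ge0.
apply: trmx_mul_self_eq0; rewrite -/s.
have := pG (z - (s / (c + 1)) *: y); rewrite form_line.
have e_def : s / (c + 1) * (c + 1) = s by rewrite divfK // gt_eqF // ltr_wpDl.
set e := s / (c + 1) in e_def *; nra.
Qed.

Lemma psdmx_conj (m d : nat) (P : 'M[R]_m) (H : 'M[R]_(m, d)) :
  psdmx P -> psdmx (H^T *m P *m H).
Proof.
move=> [sP pP]; split; first by rewrite !trmx_mul trmxK sP mulmxA.
by move=> x; rewrite !mulmxA -trmx_mul -!mulmxA mulmxA; exact: pP.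
Qed.

Lemma unitmx_1DM_psdmx (d : nat) (G A : 'M[R]_d) :
  psdmx G -> psdmx A -> 1%:M + G *m A \in unitmx.
Proof.
move=> psdG [sA pA]; apply: inj_unitmx => x.
rewrite mulmxDl mul1mx => /eqP; rewrite addr_eq0 => /eqP x_def.
have form_x : x^T *m A *m x = - ((A *m x)^T *m G *m (A *m x)).
  by rewrite {2}x_def mulmxN trmx_mul sA !mulmxA.
have Ax0 : A *m x = 0.
  apply: psdmx_form_eq0 => //; apply/eqP; rewrite eq_le pA andbT.
  by rewrite form_x mxE oppr_le0; have [_ ->] := psdG.
by rewrite x_def -mulmxA Ax0 mulmx0 oppr0.
Qed.

Lemma psdmx_invmx_1DM_mul (d : nat) (G A : 'M[R]_d) :
  psdmx G -> psdmx A -> psdmx (invmx (1%:M + G *m A) *m G).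
Proof.
move=> psdG psdA; have [[sG pG] [sA pA]] := (psdG, psdA).
set M := 1%:M + G *m A; have uM : M \in unitmx by exact: unitmx_1DM_psdmx.
have MT : M^T = 1%:M + A *m G by rewrite linearD /= trmx1 trmx_mul sG sA.
have MG : M *m G = G *m M^T by rewrite MT mulmxDl mulmxDr mul1mx mulmx1 mulmxA.
split.
  rewrite trmx_mul sG trmx_inv -{1}(mulKmx uM G) MG -!mulmxA.
  by rewrite mulmxV ?unitmx_tr // mulmx1.
move=> x; set y := (invmx M)^T *m x.
have x_def : x = M^T *m y by rewrite mulmxA -trmx_mul mulVmx // trmx1 mul1mx.
have xM : x^T *m invmx M = y^T by rewrite trmx_mul trmxK.
have form_split :
    y^T *m G *m (M^T *m y) = y^T *m G *m y + (G *m y)^T *m A *m (G *m y).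
  by rewrite MT mulmxDl mul1mx mulmxDr [(G *m y)^T]trmx_mul sG !mulmxA.
rewrite mulmxA xM {1}x_def form_split mxE.
by apply: addr_ge0; [exact: pG | exact: pA].
Qed.

Lemma psdmx_emp_cov (d J : nat) (v : 'I_J -> 'cV[R]_d) : psdmx (emp_cov v).
Proof.
rewrite /emp_cov; split.
  rewrite linearZ linear_sum /=; congr (_ *: _); apply: eq_bigr => j _.
  by rewrite trmx_mul trmxK.
move=> x; rewrite -scalemxAr -scalemxAl mxE mulmx_sumr mulmx_suml summxE.
case: J v => [|J] v; first by rewrite big_ord0 mulr0.
apply: mulr_ge0; first by rewrite -natr1 addrK invr_ge0 ler0n.
apply: sumr_ge0 => j _; set a := v j - emp_mean v.
have -> : x^T *m (a *m a^T) *m x = (a^T *m x)^T *m (a^T *m x).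
  by rewrite trmx_mul trmxK !mulmxA.
exact: trmx_mul_self_ge0.
Qed.

Lemma psdmx_Gseq (n d : nat) (H : 'M[R]_(n, d)) (S : 'M[R]_n) (G0 : 'M[R]_d)
  (i : nat) : psdmx G0 -> psdmx (invmx S) -> psdmx (Gseq H S G0 i).
Proof.
move=> psdG0 psdSi; elim: i => [|i IHi] //=; set Gi := Gseq H S G0 i.
rewrite (_ : Gi *m H^T *m invmx S *m H = Gi *m (H^T *m invmx S *m H)).
  exact: psdmx_invmx_1DM_mul IHi (psdmx_conj H psdSi).
by rewrite !mulmxA.
Qed.

End SemidefiniteMatrices.

Section DefiniteMatrices.
Variable R : realFieldType.

Lemma spd_form_eq0 (n : nat) (S : 'M[R]_n) (x : 'cV[R]_n) :
  spd S -> (x^T *m S *m x) 0 0 = 0 -> x = 0.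
Proof.
by move=> [_ pS] qx; have [//|/pS] := eqVneq x 0; rewrite qx ltxx.
Qed.

Lemma spd_psdmx (n : nat) (S : 'M[R]_n) : spd S -> psdmx S.
Proof.
move=> [sS pS]; split=> // x; have [->|/pS/ltW //] := eqVneq x 0.
by rewrite mulmx0 mxE.
Qed.

Lemma spd_unitmx (n : nat) (S : 'M[R]_n) : spd S -> S \in unitmx.
Proof.
move=> spdS; apply: inj_unitmx => x Sx0.
by apply: (spd_form_eq0 spdS); rewrite -mulmxA Sx0 mulmx0 mxE.
Qed.

Lemma spd_invmx (n : nat) (S : 'M[R]_n) : spd S -> spd (invmx S).
Proof.
move=> spdS; have uS := spd_unitmx spdS; have [sS pS] := spdS.
split=> [|x x_neq0]; first by rewrite trmx_inv sS.
have y_neq0 : invmx S *m x != 0.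
  by apply: contraNneq x_neq0 => y0; rewrite -(mulKVmx uS x) y0 mulmx0.
have := pS _ y_neq0.
by rewrite trmx_mul trmx_inv sS -mulmxA mulKVmx // mulmxA.
Qed.

Lemma mul_pinv_normal (n d : nat) (H : 'M[R]_(n, d)) (P : 'M[R]_n)
  (X : 'M[R]_d) (x : 'cV[R]_d) : spd P ->
  H^T *m P *m H *m X *m (H^T *m P *m H) = H^T *m P *m H ->
  H *m (X *m (H^T *m P *m H) *m x) = H *m x.
Proof.
set A := H^T *m P *m H => spdP AXA; set y := x - X *m A *m x.
have Ay0 : A *m y = 0 by rewrite mulmxBr (mulmxA A) (mulmxA A) AXA subrr.
have Hy0 : H *m y = 0.
  apply: (spd_form_eq0 spdP).
  rewrite trmx_mul !mulmxA -(mulmxA y^T H^T) -(mulmxA y^T) -/A -mulmxA.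
  by rewrite Ay0 mulmx0 mxE.
by apply/eqP; rewrite eq_sym -subr_eq0 -mulmxBr Hy0.
Qed.

End DefiniteMatrices.

Section PencilEigenvectors.
Variables (R : realFieldType) (n d : nat).
Variables (H : 'M[R]_(n, d)) (S : 'M[R]_n) (G : 'M[R]_d) (w : 'cV[R]_n).

Lemma pencil_eigvec_pos (delta : R) :
  S \in unitmx -> delta != 0 -> H *m G *m H^T *m w = delta *: (S *m w) ->
  let u := delta^-1 *: (G *m H^T *m w) in
  G *m H^T *m invmx S *m H *m u = delta *: u /\ w = invmx S *m H *m u.
Proof.
move=> uS delta_neq0 Cw u.
have Hu : H *m u = S *m w.
  by rewrite /u -scalemxAr !mulmxA Cw scalerA mulVf // scale1r.
split; last by rewrite -mulmxA Hu mulKmx.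
by rewrite -mulmxA Hu -mulmxA mulKmx // /u scalerA mulfV // scale1r.
Qed.

Lemma pencil_eigvec_zero (X : 'M[R]_d) (x : 'cV[R]_d) :
  spd S -> psdmx G ->
  H^T *m invmx S *m H *m X *m (H^T *m invmx S *m H) = H^T *m invmx S *m H ->
  H *m G *m H^T *m w = 0 -> w = invmx S *m H *m x ->
  let u := X *m (H^T *m invmx S) *m S *m w in
  G *m H^T *m invmx S *m H *m u = 0 /\ w = invmx S *m H *m u.
Proof.
move=> spdS psdG AXA Cw0 w_def u.
have Hu : H *m u = H *m x.
  rewrite -(mul_pinv_normal x (spd_invmx spdS) AXA) /u w_def !mulmxA.
  by rewrite mulmxKV // spd_unitmx.
have w_Hu : w = invmx S *m H *m u by rewrite -mulmxA Hu mulmxA.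
have GHw : G *m (H^T *m w) = 0.
  apply: psdmx_form_eq0 psdG _.
  have -> : (H^T *m w)^T *m G *m (H^T *m w) = w^T *m (H *m G *m H^T *m w).
    by rewrite trmx_mul trmxK !mulmxA.
  by rewrite Cw0 mulmx0 mxE.
split=> //.
have -> : G *m H^T *m invmx S *m H *m u = G *m (H^T *m (invmx S *m H *m u)).
  by rewrite !mulmxA.
by rewrite -w_Hu.
Qed.

End PencilEigenvectors.

Theorem proposition4p9 (R : realFieldType) (n d h J : nat)
  (H : 'M[R]_(n, d)) (S : 'M[R]_n) (v : 'I_J -> 'cV[R]_d)
  (Mp : 'M[R]_d)
  (hrank : \rank H = h) (hS : spd S) (hJ : (1 < J)%N)
  (hMp : is_mp_pinv (H^T *m invmx S *m H) Mp)
  (i : nat) (r : nat) (w : 'I_n -> 'cV[R]_n) (delta : 'I_n -> R) :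
  let G := Gseq H S (emp_cov v) in
  let C := H *m G i *m H^T in
  (* generalized eigenvectors of the pencil (C_i, S) *)
  (forall l, C *m w l = delta l *: (S *m w l)) ->
  (* S-orthogonal basis of R^n *)
  row_free (\matrix_(l < n) (w l)^T) ->
  (forall k l, k != l -> (w k)^T *m S *m w l = 0) ->
  (* r = number of positive eigenvalues *)
  #|[set l : 'I_n | 0 < delta l]| = r ->
  (r <= h)%N ->
  (forall l : 'I_n, (l < r)%N ->
     0 < delta l /\ exists x : 'cV[R]_d, w l = invmx S *m H *m x) ->
  (forall l : 'I_n, (r <= l)%N -> (l < h)%N ->
     delta l = 0 /\ exists x : 'cV[R]_d, w l = invmx S *m H *m x) ->
  (forall l : 'I_n, (h <= l)%N -> H^T *m w l = 0) ->
  forall l : 'I_n, (l < h)%N ->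
    let u := if (l < r)%N then (delta l)^-1 *: (G i *m H^T *m w l)
             else Mp *m (H^T *m invmx S) *m S *m w l in
    G i *m H^T *m invmx S *m H *m u = delta l *: u /\
    w l = invmx S *m H *m u.
Proof.
move=> G C Cw _ _ _ _ w_pos w_zero _ l lh u.
have psdG : psdmx (G i).
  exact: psdmx_Gseq (psdmx_emp_cov v) (spd_psdmx (spd_invmx hS)).
rewrite /u; case: ltnP => [lr | rl].
  have [delta_gt0 _] := w_pos l lr.
  exact: pencil_eigvec_pos (spd_unitmx hS) (lt0r_neq0 delta_gt0) (Cw l).
have [delta0 [x w_def]] := w_zero l rl lh.
rewrite delta0 scale0r; apply: pencil_eigvec_zero hS psdG _ _ w_def.
  by case: hMp.
by move: (Cw l); rewrite delta0 scale0r.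
Qed.
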